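(* For every complex $s$ with $\Re(s)>3$, \[\sum_{k=1}^\infty (-1)^{k-1}k^2\,\zeta(s,k)=\tfrac{1}{2}\Big\{(1-2^{2-s}) \zeta(s-1)+(1-2^{3-s}) \zeta(s-2)\Big\}.\]
   Context: $\zeta(s,\alpha)=\sum_{n=0}^\infty (n+\alpha)^{-s}$ denotes the Hurwitz zeta function ($\Re(s)>1$, $\alpha>0$), and $\zeta(s)=\zeta(s,1)$ is the Riemann zeta function. *)

From Stdlib Require Import Reals.
From Coquelicot Require Import Coquelicot.
Open Scope C_scope.

(* Complex power x^s for real x > 0 and complex s: exp(s * ln x),
   written out as exp(Re s ln x) (cos(Im s ln x) + i sin(Im s ln x)). *)
Definition cpow (x : R) (s : C) : C :=
  (exp (Re s * ln x) * cos (Im s * ln x), exp (Re s * ln x) * sin (Im s * ln x))%R.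

(* Sum of a complex series (value meaningful when the series converges). *)
Definition Cseries (f : nat -> C) : C :=
  (Series (fun n => Re (f n)), Series (fun n => Im (f n))).

Definition hurwitz_zeta (s : C) (a : R) : C :=
  Cseries (fun n => cpow (INR n + a) (- s)).

Definition riemann_zeta (s : C) : C := hurwitz_zeta s 1.

From Stdlib Require Import Reals Lra Lia.
From Coquelicot Require Import Coquelicot.
Open Scope C_scope.

(* Write b_k = (-1)^(k-1) k^2 and B_K = b_1 + ... + b_K, which has the closed
   form B_K = (-1)^(K-1) K (K+1) / 2.  Since zeta(s,k) = k^(-s) + zeta(s,k+1), Abel's
   summation by parts gives
     sum_{k<=K} b_k zeta(s,k) = sum_{m<=K} B_m m^(-s) + B_K zeta(s,K+1)
                              = (eta_K(s-1) + eta_K(s-2)) / 2 + B_K zeta(s,K+1),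
   where eta_K(t) = sum_{m<=K} (-1)^(m-1) m^(-t).  Splitting off the even terms,
   eta_K(t) = Z_K(t) - 2^(1-t) Z_(K/2)(t) with Z_K the partial sums of zeta(t), so
   eta_K(t) -> (1 - 2^(1-t)) zeta(t) for Re t > 1.  Finally |B_K| <= (K+1)^2 and
   |zeta(s,K+1)| = O((K+1)^(1-Re s)), so the remainder vanishes when Re s > 3.
   The file develops, in order: laws of complex powers; a telescoping majorant for the real
   p-series (an elementary integral test); convergence, a bound and the shift identity for
   the Hurwitz series; finite-sum identities (alternating sums, summation by parts, the
   closed form of B_K); limits of the zeta and eta partial sums and of the remainder; and
   the theorem. *)

Lemma cpow_plus (x : R) (u v : C) : cpow x (u + v) = cpow x u * cpow x v.
Proof.
  destruct u as [u1 u2], v as [v1 v2]; unfold cpow; simpl.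
  rewrite !Rmult_plus_distr_r, exp_plus, cos_plus, sin_plus.
  apply injective_projections; simpl; ring.
Qed.

Lemma cpow_mult (x y : R) (s : C) : (0 < x)%R -> (0 < y)%R ->
  cpow (x * y) s = cpow x s * cpow y s.
Proof.
  intros hx hy; destruct s as [a b]; unfold cpow; simpl.
  rewrite ln_mult, !Rmult_plus_distr_l, exp_plus, cos_plus, sin_plus by assumption.
  apply injective_projections; simpl; ring.
Qed.

Lemma cpow_1 (x : R) : (0 < x)%R -> cpow x 1 = RtoC x.
Proof.
  intros hx; unfold cpow; simpl.
  rewrite Rmult_0_l, cos_0, sin_0, Rmult_1_l, exp_ln by assumption.
  apply injective_projections; simpl; ring.
Qed.

Lemma Cmod_cpow (x : R) (s : C) : Cmod (cpow x s) = Rpower x (Re s).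
Proof.
  unfold cpow, Cmod, Rpower; simpl.
  set (E := exp (Re s * ln x)); set (t := (Im s * ln x)%R).
  replace (E * cos t * (E * cos t * 1) + E * sin t * (E * sin t * 1))%R
    with (E * E * (sin t * sin t + cos t * cos t))%R by ring.
  pose proof (sin2_cos2 t) as Hpyth; unfold Rsqr in Hpyth.
  rewrite Hpyth, Rmult_1_r.
  apply sqrt_square; left; apply exp_pos.
Qed.
Section RealPowerBounds.
Local Open Scope R_scope.

Lemma ln_one_minus_le (u : R) : u < 1 -> ln (1 - u) <= - u.
Proof.
  intros hu. rewrite <- (ln_exp (- u)).
  apply ln_le; [lra|]. pose proof (exp_ineq1_le (- u)). lra.
Qed.

Lemma bernoulli_rpower (u p : R) : 0 < u < 1 -> 0 <= p -> 1 + p * u <= Rpower (1 - u) (- p).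
Proof.
  intros hu hp. unfold Rpower.
  eapply Rle_trans; [| apply exp_ineq1_le].
  pose proof (ln_one_minus_le u ltac:(lra)). nra.
Qed.

Lemma lim_rpower_neg (al : R) : al < 0 -> is_lim_seq (fun K => Rpower (INR (S K)) al) 0.
Proof.
  intros hal. unfold Rpower.
  assert (lim_n : is_lim_seq (fun K => INR (S K)) p_infty).
  { apply (is_lim_seq_incr_1 INR p_infty), is_lim_seq_INR. }
  assert (lim_ln : is_lim_seq (fun K => ln (INR (S K))) p_infty).
  { apply (is_lim_comp_seq ln _ p_infty p_infty is_lim_ln_p); [| exact lim_n].
    exists O. intros n _. discriminate. }
  assert (lim_arg : is_lim_seq (fun K => al * ln (INR (S K))) m_infty).
  { pose proof (is_lim_seq_scal_l _ al _ lim_ln) as H.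
    replace (Rbar_mult al p_infty) with m_infty in H; [exact H|].
    simpl. destruct (Rle_dec 0 al); [exfalso; lra | reflexivity]. }
  apply (is_lim_comp_seq exp _ m_infty 0 is_lim_exp_m); [| exact lim_arg].
  exists O. intros n _. discriminate.
Qed.

Variable sg : R.
Hypothesis sg_gt_1 : 1 < sg.

(* G(x) = x^(1-sg)/(sg-1): an antiderivative of -x^(-sg), majorizing the tail of the p-series. *)
Definition tail_majorant (x : R) : R := Rpower x (1 - sg) / (sg - 1).

Lemma tail_majorant_nonneg (x : R) : 0 <= tail_majorant x.
Proof. unfold tail_majorant, Rpower. apply Rdiv_le_0_compat; [left; apply exp_pos | lra]. Qed.

Lemma rpower_le_majorant_step (x : R) : 1 < x ->
  Rpower x (- sg) <= tail_majorant (x - 1) - tail_majorant x.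
Proof.
  intros hx. unfold tail_majorant.
  set (P := Rpower x (- sg)).
  assert (hpow : Rpower x (1 - sg) = x * P).
  { unfold P. replace (1 - sg) with (1 + - sg) by ring. rewrite Rpower_plus, Rpower_1 by lra. reflexivity. }
  assert (hinv : 0 < / x < 1).
  { split; [apply Rinv_0_lt_compat; lra|]. rewrite <- Rinv_1. apply Rinv_lt_contravar; lra. }
  assert (hbern : x * P * (1 + (sg - 1) * / x) <= Rpower (x - 1) (1 - sg)).
  { replace (x - 1) with (x * (1 - / x)) by (field; lra).
    rewrite <- Rpower_mult_distr, <- hpow by lra.
    apply Rmult_le_compat_l; [unfold Rpower; left; apply exp_pos|].
    replace (1 - sg) with (- (sg - 1)) by ring. apply bernoulli_rpower; lra. }
  replace (x * P * (1 + (sg - 1) * / x)) with (x * P + (sg - 1) * P) in hbern by (field; lra).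
  apply (Rmult_le_reg_r (sg - 1)); [lra|].
  unfold Rdiv. rewrite Rmult_minus_distr_r, !Rmult_assoc, Rinv_l, hpow by lra. lra.
Qed.

Lemma rpower_partial_sum_le (a : R) (N : nat) : 0 < a ->
  sum_n (fun n => Rpower (INR n + a) (- sg)) N <= Rpower a (- sg) + tail_majorant a.
Proof.
  intros ha.
  assert (invariant : forall M, sum_n (fun n => Rpower (INR n + a) (- sg)) M + tail_majorant (INR M + a)
                                 <= Rpower a (- sg) + tail_majorant a).
  { induction M as [|M IH].
    - rewrite sum_O; simpl. rewrite Rplus_0_l. lra.
    - rewrite sum_Sn. change plus with Rplus.
      assert (hx : 1 < INR (S M) + a) by (rewrite S_INR; pose proof (pos_INR M); lra).
      pose proof (rpower_le_majorant_step _ hx) as step.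
      replace (INR (S M) + a - 1) with (INR M + a) in step by (rewrite S_INR; ring).
      lra. }
  pose proof (invariant N). pose proof (tail_majorant_nonneg (INR N + a)). lra.
Qed.

Lemma ex_series_rpower (a : R) : 0 < a -> ex_series (fun n => Rpower (INR n + a) (- sg)).
Proof.
  intros ha.
  destruct (ex_finite_lim_seq_incr (sum_n (fun n => Rpower (INR n + a) (- sg)))
              (Rpower a (- sg) + tail_majorant a)) as [l Hl].
  - intros n. rewrite sum_Sn. change plus with Rplus.
    assert (0 < Rpower (INR (S n) + a) (- sg)) by apply exp_pos. lra.
  - intros n. apply rpower_partial_sum_le, ha.
  - exists l. exact Hl.
Qed.

End RealPowerBounds.

Lemma sum_n_Re (f : nat -> C) (N : nat) : Re (sum_n f N) = sum_n (fun n => Re (f n)) N.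
Proof.
  induction N as [|N IH]; [rewrite !sum_O; reflexivity|].
  rewrite !sum_Sn, <- IH. reflexivity.
Qed.

Lemma sum_n_Im (f : nat -> C) (N : nat) : Im (sum_n f N) = sum_n (fun n => Im (f n)) N.
Proof.
  induction N as [|N IH]; [rewrite !sum_O; reflexivity|].
  rewrite !sum_Sn, <- IH. reflexivity.
Qed.

Lemma Cseries_correct (f : nat -> C) (l : C) :
  is_series (V := C_NormedModule) f l -> Cseries f = l.
Proof.
  intros H. unfold is_series in H.
  pose proof (proj1 (@filterlim_locally nat C_UniformSpace eventually _ (sum_n f) l) H) as close.
  clear H.
  destruct l as [l1 l2]; unfold Cseries.
  apply injective_projections; simpl; apply is_series_unique; unfold is_series;
    apply (proj2 (filterlim_locally _ _)); intros eps; specialize (close eps);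
    revert close; apply filter_imp; intros N [close_re close_im].
  - rewrite <- sum_n_Re. exact close_re.
  - rewrite <- sum_n_Im. exact close_im.
Qed.

Lemma Cmod_sum_n (f : nat -> C) (N : nat) :
  (Cmod (sum_n f N) <= sum_n (fun n => Cmod (f n)) N)%R.
Proof.
  induction N as [|N IH]; [rewrite !sum_O; lra|].
  rewrite !sum_Sn. change (@plus R_AbelianMonoid) with Rplus.
  eapply Rle_trans; [apply Cmod_triangle | lra].
Qed.

Section HurwitzZeta.
Variables (s : C) (a : R).
Hypotheses (Re_s_gt_1 : (1 < Re s)%R) (a_pos : (0 < a)%R).

Lemma Cmod_hurwitz_term (n : nat) : Cmod (cpow (INR n + a) (- s)) = Rpower (INR n + a) (- Re s).
Proof. rewrite Cmod_cpow. reflexivity. Qed.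

Lemma hurwitz_is_series :
  is_series (V := C_NormedModule) (fun n => cpow (INR n + a) (- s)) (hurwitz_zeta s a).
Proof.
  assert (converges : ex_series (V := C_CompleteNormedModule) (fun n => cpow (INR n + a) (- s))).
  { apply (ex_series_le _ (fun n => Rpower (INR n + a) (- Re s))).
    - intros n. change norm with Cmod. rewrite Cmod_hurwitz_term. lra.
    - apply ex_series_rpower; assumption. }
  destruct converges as [l Hl].
  unfold hurwitz_zeta. rewrite (Cseries_correct _ l Hl). exact Hl.
Qed.

Lemma hurwitz_bound :
  (Cmod (hurwitz_zeta s a) <= Rpower a (- Re s) + tail_majorant (Re s) a)%R.
Proof.
  assert (lim_mod : is_lim_seq (fun N => Cmod (sum_n (fun n => cpow (INR n + a) (- s)) N))
                               (Cmod (hurwitz_zeta s a))).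
  { exact (filterlim_comp _ _ _ _ _ _ _ _ hurwitz_is_series
             (@filterlim_norm C_AbsRing C_NormedModule _)). }
  change (Rbar_le (Cmod (hurwitz_zeta s a)) (Rpower a (- Re s) + tail_majorant (Re s) a)%R).
  eapply is_lim_seq_le; [| exact lim_mod | apply is_lim_seq_const].
  intros N; simpl. eapply Rle_trans; [apply Cmod_sum_n|].
  rewrite (sum_n_ext _ _ _ Cmod_hurwitz_term).
  apply rpower_partial_sum_le; assumption.
Qed.

Lemma hurwitz_shift : hurwitz_zeta s a = cpow a (- s) + hurwitz_zeta s (a + 1).
Proof.
  pose proof hurwitz_is_series as H.
  set (l := hurwitz_zeta s a) in *.
  assert (shifted : is_series (V := C_NormedModule)
                      (fun n => cpow (INR n + (a + 1)) (- s)) (l - cpow a (- s))).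
  { assert (split_first : l = plus (l - cpow a (- s)) (cpow (INR 0 + a) (- s))).
    { change plus with Cplus. simpl INR. rewrite Rplus_0_l. ring. }
    rewrite split_first in H.
    generalize (is_series_incr_1 _ _ H). apply is_series_ext. intros n. rewrite S_INR. f_equal. ring. }
  unfold hurwitz_zeta at 1. rewrite (Cseries_correct _ _ shifted). ring.
Qed.

End HurwitzZeta.

(* Finite sums a_1 + ... + a_K of a complex sequence indexed from 1. *)
Fixpoint psum (a : nat -> C) (K : nat) : C :=
  match K with O => 0 | S k => psum a k + a (S k) end.

Lemma psum_sum_n (a : nat -> C) (N : nat) : psum a (S N) = sum_n (fun n => a (S n)) N.
Proof.
  induction N as [|N IH].
  - rewrite sum_O. simpl. ring.
  - rewrite sum_Sn, <- IH. reflexivity.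
Qed.

Lemma psum_S (a : nat -> C) (K : nat) : psum a (S K) = psum a K + a (S K).
Proof. reflexivity. Qed.

Lemma psum_ext (a b : nat -> C) (K : nat) :
  (forall m, a (S m) = b (S m)) -> psum a K = psum b K.
Proof. intros Hab. induction K as [|K IH]; simpl; [reflexivity | rewrite IH, Hab; reflexivity]. Qed.

Lemma psum_plus (a b : nat -> C) (K : nat) : psum (fun m => a m + b m) K = psum a K + psum b K.
Proof. induction K as [|K IH]; simpl; [ring | rewrite IH; ring]. Qed.

Lemma psum_scal (c : C) (a : nat -> C) (K : nat) : psum (fun m => c * a m) K = c * psum a K.
Proof. induction K as [|K IH]; simpl; [ring | rewrite IH; ring]. Qed.

Lemma alternating_psum (a : nat -> C) (K : nat) :
  psum (fun m => RtoC ((-1) ^ S m) * a m) K = psum a K - 2 * psum (fun j => a (j + j)%nat) (Nat.div2 K).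
Proof.
  set (alt := fun m => RtoC ((-1) ^ S m) * a m).
  assert (even_odd : forall n, psum alt (n + n) = psum a (n + n) - 2 * psum (fun j => a (j + j)%nat) n /\
                               psum alt (S (n + n)) = psum a (S (n + n)) - 2 * psum (fun j => a (j + j)%nat) n).
  { induction n as [|n [IH_even IH_odd]].
    - unfold alt; simpl. split; apply injective_projections; simpl; ring.
    - assert (sign_at_even : RtoC ((-1) ^ S (S (S (n + n)))) = -1).
      { replace (S (S (S (n + n)))) with (S (2 * S n)) by lia.
        rewrite pow_1_odd. apply injective_projections; simpl; ring. }
      assert (sign_at_odd : RtoC ((-1) ^ S (S (S (S (n + n))))) = 1).
      { replace (S (S (S (S (n + n))))) with (2 * S (S n))%nat by lia.
        rewrite pow_1_even. reflexivity. }
      assert (double_S : (S n + S n)%nat = S (S (n + n))) by lia.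
      assert (next_even : psum alt (S (S (n + n)))
                          = psum a (S (S (n + n))) - 2 * psum (fun j => a (j + j)%nat) (S n)).
      { rewrite (psum_S alt), (psum_S a (S (n + n))), (psum_S _ n), IH_odd, double_S. unfold alt. rewrite sign_at_even. ring. }
      rewrite double_S. split; [exact next_even|].
      rewrite (psum_S alt), next_even, (psum_S a (S (S (n + n)))). unfold alt. rewrite sign_at_odd. ring. }
  destruct (Nat.Even_or_Odd K) as [[n ->] | [n ->]].
  - rewrite Nat.div2_double. replace (2 * n)%nat with (n + n)%nat by lia. apply even_odd.
  - replace (2 * n + 1)%nat with (S (2 * n)) by lia. rewrite Nat.div2_succ_double.
    replace (2 * n)%nat with (n + n)%nat by lia. apply even_odd.
Qed.

Lemma summation_by_parts (b u Z : nat -> C) (K : nat) :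
  (forall k, Z (S k) = u (S k) + Z (S (S k))) ->
  psum (fun k => b k * Z k) K = psum (fun m => psum b m * u m) K + psum b K * Z (S K).
Proof.
  intros HZ. induction K as [|K IH]; simpl; [ring|].
  rewrite IH, (HZ K). ring.
Qed.

Lemma signed_square_psum (m : nat) :
  psum (fun k => RtoC ((-1) ^ S k * INR k ^ 2)) m = RtoC ((-1) ^ S m * (INR m * INR (S m) / 2)).
Proof.
  induction m as [|m IH].
  - simpl. apply injective_projections; simpl; field.
  - change (psum (fun k => RtoC ((-1) ^ S k * INR k ^ 2)) (S m))
      with (psum (fun k => RtoC ((-1) ^ S k * INR k ^ 2)) m + RtoC ((-1) ^ S (S m) * INR (S m) ^ 2)).
    rewrite IH, <- RtoC_plus. f_equal.
    rewrite !S_INR. simpl pow. field.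
Qed.

Lemma lim_C_plus (u v : nat -> C) (a b : C) :
  filterlim u eventually (locally (T := C_UniformSpace) a) ->
  filterlim v eventually (locally (T := C_UniformSpace) b) ->
  filterlim (fun n => u n + v n) eventually (locally (T := C_UniformSpace) (a + b)).
Proof.
  intros Hu Hv. apply (filterlim_comp_2 u v Cplus Hu Hv).
  exact (@filterlim_plus C_AbsRing C_NormedModule a b).
Qed.

Lemma lim_C_scal (u : nat -> C) (a c : C) :
  filterlim u eventually (locally (T := C_UniformSpace) a) ->
  filterlim (fun n => c * u n) eventually (locally (T := C_UniformSpace) (c * a)).
Proof.
  intros Hu. apply (filterlim_comp _ _ _ u (Cmult c) _ _ _ Hu).
  exact (@filterlim_scal_r C_AbsRing C_NormedModule c a).
Qed.

Lemma lim_C_zero_of_bound (u : nat -> C) (r : nat -> R) :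
  (forall n, (Cmod (u n) <= r n)%R) -> is_lim_seq r 0%R ->
  filterlim u eventually (locally (T := C_UniformSpace) (RtoC 0)).
Proof.
  intros Hbound Hr.
  apply (@filterlim_norm_zero nat C_AbsRing C_NormedModule eventually _).
  assert (mod_lim : is_lim_seq (fun n => Cmod (u n)) 0%R).
  { apply (is_lim_seq_le_le (fun _ => 0%R) _ r); [| apply is_lim_seq_const | exact Hr].
    intros n. split; [apply Cmod_ge_0 | apply Hbound]. }
  exact mod_lim.
Qed.

Lemma filterlim_S_eventually : filterlim S eventually eventually.
Proof. intros P [N HN]. exists N. intros n hn. apply HN. lia. Qed.

Lemma filterlim_div2_eventually : filterlim Nat.div2 eventually eventually.
Proof.
  intros P [N HN]. exists (2 * N)%nat. intros n hn.
  apply HN, Nat.div2_le_lower_bound. lia.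
Qed.

Lemma filterlim_of_shift {U : Type} (u : nat -> U) (F : (U -> Prop) -> Prop) :
  filterlim (fun n => u (S n)) eventually F -> filterlim u eventually F.
Proof.
  intros H P HP. destruct (H P HP) as [N HN]. exists (S N).
  intros [|n] hn; [lia | apply HN; lia].
Qed.

Lemma INR_S_pos (m : nat) : (0 < INR (S m))%R.
Proof. apply lt_0_INR. lia. Qed.

Definition zeta_sum (t : C) (K : nat) : C := psum (fun m => cpow (INR m) (- t)) K.
Definition eta_sum (t : C) (K : nat) : C := psum (fun m => RtoC ((-1) ^ S m) * cpow (INR m) (- t)) K.

Lemma zeta_sum_lim (t : C) : (1 < Re t)%R ->
  filterlim (zeta_sum t) eventually (locally (T := C_UniformSpace) (riemann_zeta t)).
Proof.
  intros ht. apply filterlim_of_shift.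
  eapply filterlim_ext; [| exact (hurwitz_is_series t 1 ht Rlt_0_1)].
  intros N. unfold zeta_sum. rewrite psum_sum_n.
  apply sum_n_ext. intros n. rewrite S_INR. reflexivity.
Qed.

(* The alternating series sums to (1 - 2^(1-t)) zeta(t): its partial sums are
   Z_K - 2 * 2^(-t) Z_(K/2), as a_(2j) = 2^(-t) a_j for a_m = m^(-t). *)
Lemma eta_sum_lim (t : C) : (1 < Re t)%R ->
  filterlim (eta_sum t) eventually
    (locally (T := C_UniformSpace) ((1 - cpow 2 (1 - t)) * riemann_zeta t)).
Proof.
  intros ht.
  assert (even_terms : forall K, psum (fun j => cpow (INR (j + j)) (- t)) K = cpow 2 (- t) * zeta_sum t K).
  { intros K. unfold zeta_sum. rewrite <- psum_scal. apply psum_ext. intros m.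
    rewrite plus_INR, <- cpow_mult by (lra || apply INR_S_pos). f_equal. ring. }
  apply (filterlim_ext (fun K => zeta_sum t K + (- (2 * cpow 2 (- t))) * zeta_sum t (Nat.div2 K))).
  { intros K. unfold eta_sum. rewrite alternating_psum, even_terms. fold (zeta_sum t K). ring. }
  replace ((1 - cpow 2 (1 - t)) * riemann_zeta t)
    with (riemann_zeta t + (- (2 * cpow 2 (- t))) * riemann_zeta t)
    by (replace (1 - t) with (1 + - t) by ring; rewrite cpow_plus, cpow_1 by lra; ring).
  apply lim_C_plus; [apply zeta_sum_lim, ht|].
  apply lim_C_scal.
  exact (filterlim_comp _ _ _ _ _ _ _ _ filterlim_div2_eventually (zeta_sum_lim t ht)).
Qed.

Definition signed_square (k : nat) : C := RtoC ((-1) ^ S k * INR k ^ 2).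

(* x^(-(t-1)) = x * x^(-t), used to trade the factors m, m^2 for shifts of the exponent. *)
Lemma cpow_shift_one (x : R) (t : C) : (0 < x)%R -> cpow x (- (t - 1)) = x * cpow x (- t).
Proof.
  intros hx. replace (- (t - 1)) with (1 + - t) by ring.
  rewrite cpow_plus, cpow_1 by exact hx. reflexivity.
Qed.

(* Summation by parts against zeta(s,k) = k^(-s) + zeta(s,k+1), with the closed form of the
   partial sums of the coefficients, turns the K-th partial sum into two eta partial sums
   plus a remainder. *)
Lemma signed_square_hurwitz_psum (s : C) (K : nat) : (1 < Re s)%R ->
  psum (fun k => signed_square k * hurwitz_zeta s (INR k)) K
  = / 2 * (eta_sum (s - 1) K + eta_sum (s - 2) K)
    + psum signed_square K * hurwitz_zeta s (INR (S K)).
Proof.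
  intros hs.
  rewrite (summation_by_parts _ (fun m => cpow (INR m) (- s))).
  2: { intros k. rewrite (hurwitz_shift s (INR (S k)) hs (INR_S_pos k)), <- S_INR. reflexivity. }
  f_equal. unfold eta_sum. rewrite <- psum_plus, <- psum_scal. apply psum_ext. intros m.
  unfold signed_square. rewrite signed_square_psum.
  replace (s - 2) with ((s - 1) - 1) by ring.
  rewrite !cpow_shift_one by apply INR_S_pos.
  rewrite (S_INR (S m)). apply injective_projections; simpl; field.
Qed.

(* |B_K zeta(s, K+1)| <= (K+1)^2 ((K+1)^(-Re s) + (K+1)^(1-Re s)/(Re s-1)) -> 0 when Re s > 3. *)
Lemma by_parts_remainder_lim (s : C) : (3 < Re s)%R ->
  filterlim (fun K => psum signed_square K * hurwitz_zeta s (INR (S K))) eventually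
    (locally (T := C_UniformSpace) (RtoC 0)).
Proof.
  intros hs. assert (hs1 : (1 < Re s)%R) by lra. set (sg := Re s) in *.
  apply (lim_C_zero_of_bound _
           (fun K => Rpower (INR (S K)) (- sg + 2) + / (sg - 1) * Rpower (INR (S K)) (1 - sg + 2))%R).
  - intros K. set (y := INR (S K)). assert (hy : (0 < y)%R) by apply INR_S_pos.
    assert (square_pow : forall al, (y * y * Rpower y al = Rpower y (al + 2))%R).
    { intros al. replace (al + 2)%R with (1 + (1 + al))%R by ring.
      rewrite !Rpower_plus, Rpower_1 by exact hy. ring. }
    assert (coeff_le : (Cmod (psum signed_square K) <= y * y)%R).
    { unfold signed_square. rewrite signed_square_psum, Cmod_R, Rabs_mult, pow_1_abs.
      fold y. assert (hK : (0 <= INR K <= y)%R) by (unfold y; rewrite S_INR; pose proof (pos_INR K); lra).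
      rewrite Rabs_pos_eq by (apply Rmult_le_pos; [apply Rmult_le_pos|]; lra). nra. }
    pose proof (hurwitz_bound s y hs1 hy) as zeta_le. fold sg in zeta_le.
    pose proof (tail_majorant_nonneg sg hs1 y).
    assert (0 < Rpower y (- sg))%R by apply exp_pos.
    rewrite Cmod_mult.
    eapply Rle_trans; [apply Rmult_le_compat; [apply Cmod_ge_0 | apply Cmod_ge_0 | exact coeff_le | exact zeta_le]|].
    right. unfold tail_majorant, Rdiv.
    rewrite <- !square_pow. ring.
  - replace 0%R with (0 + / (sg - 1) * 0)%R by ring.
    apply is_lim_seq_plus'; [| apply is_lim_seq_mult'; [apply is_lim_seq_const|]];
      apply lim_rpower_neg; lra.
Qed.

Theorem mainTheorem9 (s : C) (hs : (3 < Re s)%R) :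
  is_series (V := C_NormedModule)
    (fun n : nat => RtoC ((-1) ^ n * (INR (n + 1)) ^ 2)%R * hurwitz_zeta s (INR (n + 1)))
    ((1 / 2) * ((1 - cpow 2 (2 - s)) * riemann_zeta (s - 1)
              + (1 - cpow 2 (3 - s)) * riemann_zeta (s - 2))).
Proof.
  assert (hs1 : (1 < Re (s - 1))%R) by (unfold Re in *; simpl in *; lra).
  assert (hs2 : (1 < Re (s - 2))%R) by (unfold Re in *; simpl in *; lra).
  apply (is_series_ext (fun n => signed_square (S n) * hurwitz_zeta s (INR (S n)))).
  { intros n. rewrite Nat.add_1_r. unfold signed_square. f_equal. f_equal. simpl. ring. }
  unfold is_series.
  apply (filterlim_ext (fun N => psum (fun k => signed_square k * hurwitz_zeta s (INR k)) (S N))).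
  { intros N. apply psum_sum_n. }
  apply (filterlim_comp _ _ _ S _ _ _ _ filterlim_S_eventually).
  apply (filterlim_ext (fun K => / 2 * (eta_sum (s - 1) K + eta_sum (s - 2) K)
                                 + psum signed_square K * hurwitz_zeta s (INR (S K)))).
  { intros K. symmetry. apply signed_square_hurwitz_psum. lra. }
  replace ((1 / 2) * ((1 - cpow 2 (2 - s)) * riemann_zeta (s - 1)
                      + (1 - cpow 2 (3 - s)) * riemann_zeta (s - 2)))
    with (/ 2 * ((1 - cpow 2 (1 - (s - 1))) * riemann_zeta (s - 1)
                 + (1 - cpow 2 (1 - (s - 2))) * riemann_zeta (s - 2)) + RtoC 0).
  2: { replace (1 - (s - 1)) with (2 - s) by ring. replace (1 - (s - 2)) with (3 - s) by ring. field. }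
  apply lim_C_plus; [| apply by_parts_remainder_lim, hs].
  apply lim_C_scal, lim_C_plus; apply eta_sum_lim; assumption.
Qed.
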